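(* For every $n \geq 1$, the map $\psi$ is a bijection from $\mathcal{S}^{(1)}_n$, the set of skeletons of planar linear normal $\lambda$-terms with $n$ atoms, onto $\mathcal{V}_{n-1}$, the set of v-trees with $n-1$ edges.
   Context: $\lambda$-terms, linear (closed, each abstraction binds exactly one atom), normal (no sub-term $(\lambda x.u)\,v$) and planar terms are standard; the skeleton of a term is the plane unary-binary tree (atom $\mapsto$ leaf, application $u\,v \mapsto$ binary node with left subtree from $u$ and right subtree from $v$, abstraction $\mapsto$ unary node), and planarity means the edges from each leaf's parent to its binding unary node, drawn counter-clockwise and entering from the right, do not cross; the number of atoms is the number of leaves. For a unary-binary tree $S$ and node $u$, $S_u$ is the subtree at $u$, and $\operatorname{leaf}, \operatorname{unary}$ count leaves and unary nodes. The map $\psi$: for $S \in \mathcal{S}^{(1)}_n$, let $T$ be the plane tree whose nodes are a new root $r$ and the binary nodes of $S$. For a node $u$ of $T$, let $R(u)$ be the right subtree of $u$ in $S$ if $u$ is a binary node, and $R(r)=S$. The children of $u$ in $T$, from left to right, are $x_1, \ldots, x_m$ where $x_1$ is the first binary node of $R(u)$ reached from its root through a (possibly empty) chain of unary nodes, and $x_{i+1}$ is the left child of $x_i$ in $S$ as long as it is a binary node (no children if $R(u)$ has no binary node). Label each binary node $u$ by $\ell(u) = \operatorname{leaf}(S_v) - \operatorname{unary}(S_v)$, $v$ the right child of $u$ in $S$, and label $r$ by $\ell(r) = \operatorname{leaf}(S_w) - \operatorname{unary}(S_w)$, where $w$ is the first node of $S$ (from the root) that is not unary. Set $\psi(S)=(T,\ell)$.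 A v-tree is a plane tree $T$ with integer node labels $\ell$ such that: (i) leaves have label $0$ or $1$; (ii) every non-root node $u$ with children $v_1,\ldots,v_k$ satisfies $0 \leq \ell(u) \leq 1 + \sum_{i=1}^k \ell(v_i)$; (iii) the root $r$ with children $v_1,\ldots,v_k$ satisfies $\ell(r) = 1 + \sum_{i=1}^k \ell(v_i)$. Its size is its number of edges. *)

From mathcomp Require Import all_boot all_order all_algebra.
Set Implicit Arguments. Unset Strict Implicit. Unset Printing Implicit Defensive.
Import Order.TTheory GRing.Theory Num.Theory.

Inductive term : Type :=
| Var of nat            (* de Bruijn index: 0 = nearest enclosing abstraction *)
| App of term & term
| Lam of term.

Fixpoint closed_at (k : nat) (t : term) : bool :=
  match t with
  | Var i => i < k
  | App u v => closed_at k u && closed_at k v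
  | Lam u => closed_at k.+1 u
  end.
Definition closed (t : term) : bool := closed_at 0 t.

Fixpoint occ (d : nat) (t : term) : nat :=
  match t with
  | Var i => (i == d)
  | App u v => occ d u + occ d v
  | Lam u => occ d.+1 u
  end.

Fixpoint lin_abs (t : term) : bool :=
  match t with
  | Var _ => true
  | App u v => lin_abs u && lin_abs v
  | Lam u => (occ 0 u == 1) && lin_abs u
  end.

Definition linear (t : term) : bool := closed t && lin_abs t.

Fixpoint normal (t : term) : bool :=
  match t with
  | Var _ => true
  | App (Lam _) _ => false
  | App u v => normal u && normal v
  | Lam u => normal u
  end.

(* Planarity: ordered (exchange-free) typing.  The context lists the free
   variables (as de Bruijn indices) in binding order; an application splits
   the context in order, an abstraction adds its variable at the end. *)
Inductive planar_ctx : seq nat -> term -> Prop :=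
| PVar i : planar_ctx [:: i] (Var i)
| PApp G D u v : planar_ctx G u -> planar_ctx D v -> planar_ctx (G ++ D) (App u v)
| PLam G u : planar_ctx (map S G ++ [:: 0]) u -> planar_ctx G (Lam u).

Definition planar (t : term) : Prop := planar_ctx [::] t.

Fixpoint atoms (t : term) : nat :=
  match t with
  | Var _ => 1
  | App u v => atoms u + atoms v
  | Lam u => atoms u
  end.

Inductive ubtree : Type :=
| Leaf
| Unary of ubtree
| Binary of ubtree & ubtree.

Fixpoint skeleton (t : term) : ubtree :=
  match t with
  | Var _ => Leaf
  | App u v => Binary (skeleton u) (skeleton v)
  | Lam u => Unary (skeleton u)
  end.

Fixpoint nleaf (s : ubtree) : nat :=
  match s with Leaf => 1 | Unary s' => nleaf s' | Binary l r => nleaf l + nleaf r end.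
Fixpoint nunary (s : ubtree) : nat :=
  match s with Leaf => 0 | Unary s' => (nunary s').+1 | Binary l r => nunary l + nunary r end.

Definition S1 (n : nat) (s : ubtree) : Prop :=
  exists t : term, [/\ linear t, normal t, planar t, atoms t = n & skeleton t = s].

Inductive vtree : Type := VNode of int & seq vtree.

Definition vlabel (t : vtree) : int := let: VNode l _ := t in l.
Definition vchildren (t : vtree) : seq vtree := let: VNode _ c := t in c.

Definition sum_labels (c : seq vtree) : int := (\sum_(x <- c) vlabel x)%R.

Fixpoint nonroot_ok (t : vtree) : bool :=
  let: VNode l c := t in
  [&& nilp c ==> ((l == 0%R) || (l == 1%R)),
      (0 <= l)%R, (l <= 1 + sum_labels c)%R & all nonroot_ok c].

Definition is_vtree (t : vtree) : bool :=
  let: VNode l c := t in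
  [&& nilp c ==> ((l == 0%R) || (l == 1%R)),
      l == (1 + sum_labels c)%R & all nonroot_ok c].

Fixpoint nnodes (t : vtree) : nat :=
  let: VNode _ c := t in (sumn (map nnodes c)).+1.

Definition vsize (t : vtree) : nat := (nnodes t).-1.

Definition V (m : nat) (t : vtree) : Prop := is_vtree t /\ vsize t = m.

Definition lab (s : ubtree) : int := (nleaf s)%:Z - (nunary s)%:Z.

Fixpoint strip (s : ubtree) : ubtree :=
  match s with Unary s' => strip s' | _ => s end.

(* kids s : the T-children of a node u with R(u) = s, i.e. the psi-images of
   x_1, x_2, ... where x_1 = first binary node of s after unary nodes and
   x_{i+1} = left child of x_i while binary. *)
Fixpoint kids (s : ubtree) : seq vtree :=
  match s with
  | Leaf => [::]
  | Unary s' => kids s'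
  | Binary l r => VNode (lab r) (kids r) :: lspine l
  end
with lspine (s : ubtree) : seq vtree :=
  match s with
  | Binary l r => VNode (lab r) (kids r) :: lspine l
  | _ => [::]
  end.

Definition psi (s : ubtree) : vtree := VNode (lab (strip s)) (kids s).

(* A skeleton lies in S^(1)_n exactly when it is [admissible] (no unary node
   is a left child, and below every unary node there are more leaves than unary
   nodes) and has n leaves and n unary nodes: a planar term with that skeleton is
   built by splitting the ordered context at every application.
   For a node of T with right subtree s, the label leaf - unary of s equals
   1 + (sum of the labels of its T-children) - (length of the unary chain on top
   of s).  This identity gives the v-tree conditions, and read backwards it
   recovers every unary chain from the labels, so psi is inverted node by node;
   at the root the whole skeleton is balanced, so the chain length is the root
   label itself. *)

From Pilot Require Import Defs.
From mathcomp Require Import all_boot all_order all_algebra zify.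
Set Implicit Arguments. Unset Strict Implicit. Unset Printing Implicit Defensive.
Import Order.TTheory GRing.Theory Num.Theory.

Definition unary_node (s : ubtree) : bool := if s is Unary _ then true else false.
Definition is_lam (t : term) : bool := if t is Lam _ then true else false.

Fixpoint admissible (s : ubtree) : bool :=
  match s with
  | Leaf => true
  | Unary u => admissible u && (nunary u < nleaf u)
  | Binary l r => [&& admissible l, admissible r & ~~ unary_node l]
  end.

Fixpoint nbinary (s : ubtree) : nat :=
  match s with
  | Leaf => 0
  | Unary u => nbinary u
  | Binary l r => (nbinary l + nbinary r).+1
  end.

Fixpoint unary_depth (s : ubtree) : nat :=
  if s is Unary u then (unary_depth u).+1 else 0.

Lemma nleaf_nbinary s : nleaf s = (nbinary s).+1.
Proof. elim: s => [|u IH|l IHl r IHr] //=; lia. Qed.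

Lemma admissible_nunary s : admissible s -> nunary s <= nleaf s.
Proof.
elim: s => [|u IH|l IHl r IHr] //=; first by case/andP=> _; lia.
by case/and3P=> /IHl ? /IHr ? _; lia.
Qed.

Lemma atoms_skeleton t : atoms t = nleaf (skeleton t).
Proof. by elim: t => //= u -> v ->. Qed.

Lemma unary_node_skeleton t : unary_node (skeleton t) = is_lam t.
Proof. by case: t. Qed.

Lemma normal_App u v : normal (App u v) = [&& normal u, normal v & ~~ is_lam u].
Proof. by case: u => //= *; rewrite ?andbT ?andbF. Qed.

Lemma planar_ctx_admissible G t : planar_ctx G t -> normal t ->
  admissible (skeleton t) /\ nunary (skeleton t) + size G = nleaf (skeleton t).
Proof.
elim=> {G t} [//|G D u v _ IHu _ IHv|G u _ IH].
- rewrite normal_App => /and3P [/IHu [adm_u eq_u] /IHv [adm_v eq_v] lam_u] /=.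
  by rewrite adm_u adm_v unary_node_skeleton lam_u size_cat; split=> //; lia.
- by move=> /IH [adm_u] /=; rewrite adm_u size_cat size_map /=; split=> //; lia.
Qed.

Lemma planar_ctx_closed_at G t k :
  planar_ctx G t -> all (fun i => i < k) G -> closed_at k t.
Proof.
move=> pt; elim: pt k => {G t} [i|G D u v _ IHu _ IHv|G u _ IH] k /=.
- by rewrite andbT.
- by rewrite all_cat => /andP [/IHu -> /IHv ->].
- by move=> ltGk; apply: IH; rewrite all_cat /= andbT all_map.
Qed.

Lemma planar_ctx_occ G t d : planar_ctx G t -> occ d t = count_mem d G.
Proof.
move=> pt; elim: pt d => {G t} [i|G D u v _ IHu _ IHv|G u _ IH] d /=.
- by rewrite addn0.
- by rewrite IHu IHv count_cat.
- by rewrite IH count_cat count_map /= !addn0.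
Qed.

Lemma planar_ctx_lin_abs G t : planar_ctx G t -> lin_abs t.
Proof.
elim=> {G t} [//|G D u v _ lin_u _ lin_v|G u pu lin_u] /=; first by rewrite lin_u.
rewrite lin_u andbT (planar_ctx_occ _ pu) count_cat count_map /=.
by rewrite (@eq_count _ _ pred0) ?count_pred0.
Qed.

Lemma planar_linear t : planar t -> Defs.linear t.
Proof.
move=> pt; rewrite /Defs.linear /Defs.closed (planar_ctx_lin_abs pt).
by rewrite (planar_ctx_closed_at pt).
Qed.

(* [G] is the ordered context of free variables: at a binary node the left
   subtree takes its first [nleaf l - nunary l] variables, i.e. its atoms
   minus those bound inside it. *)
Fixpoint term_of_skeleton (s : ubtree) (G : seq nat) : term :=
  match s with
  | Leaf => Var (head 0 G)
  | Unary u => Lam (term_of_skeleton u (map S G ++ [:: 0]))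
  | Binary l r => App (term_of_skeleton l (take (nleaf l - nunary l) G))
                      (term_of_skeleton r (drop (nleaf l - nunary l) G))
  end.

Lemma term_of_skeletonP s G : admissible s -> nunary s + size G = nleaf s ->
  let t := term_of_skeleton s G in [/\ planar_ctx G t, normal t & skeleton t = s].
Proof.
elim: s G => [|u IH|l IHl r IHr] G /=.
- by case: G => [|i [|j G]] //= _ _; split=> //; exact: PVar.
- case/andP=> adm_u lt_u eq_u.
  have [] := IH (map S G ++ [:: 0]) adm_u; first by rewrite size_cat size_map /=; lia.
  by move=> pt nt ->; split=> //; exact: PLam.
- case/and3P=> adm_l adm_r unary_l eq_lr.
  have := admissible_nunary adm_l; have := admissible_nunary adm_r.
  set k := nleaf l - nunary l => le_r le_l.
  have [|pl nl sl] := IHl (take k G) adm_l; first by rewrite size_takel /k; lia.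
  have [|pr nr sr] := IHr (drop k G) adm_r; first by rewrite size_drop /k; lia.
  split; last by rewrite sl sr.
    by rewrite -[G in planar_ctx G](cat_take_drop k G); exact: PApp.
  by rewrite -/(normal (App _ _)) normal_App nl nr -unary_node_skeleton sl.
Qed.

Lemma S1P n s : S1 n s <-> [/\ admissible s, nunary s = nleaf s & nleaf s = n].
Proof.
split.
  case=> t [_ nt pt <- <-]; have [] := planar_ctx_admissible pt nt.
  by rewrite atoms_skeleton addn0.
case=> adm eq_s <-; have [] := @term_of_skeletonP s [::] adm; first by rewrite addn0.
move=> pt nt st; exists (term_of_skeleton s [::]).
by split=> //; [exact: planar_linear | rewrite atoms_skeleton st].
Qed.

Definition node (r : ubtree) : vtree := VNode (lab r) (kids r).

Lemma lspine_kids s : ~~ unary_node s -> lspine s = kids s.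
Proof. by case: s. Qed.

Lemma kids_Binary l r : ~~ unary_node l -> kids (Binary l r) = node r :: kids l.
Proof. by move=> unary_l; rewrite /= lspine_kids. Qed.

Lemma strip_id s : ~~ unary_node s -> strip s = s.
Proof. by case: s. Qed.

Lemma iter_Unary_strip s : iter (unary_depth s) Unary (strip s) = s.
Proof. by elim: s => //= u ->. Qed.

Lemma strip_iter_Unary k s : strip (iter k Unary s) = strip s.
Proof. by elim: k. Qed.

Lemma kids_iter_Unary k s : kids (iter k Unary s) = kids s.
Proof. by elim: k. Qed.

Lemma lab_iter_Unary k s : lab (iter k Unary s) = (lab s - k%:Z)%R.
Proof. elim: k => [|k IHk] /=; last move: IHk; rewrite /lab /=; lia. Qed.

Lemma lab_Binary l r : lab (Binary l r) = (lab l + lab r)%R.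
Proof. rewrite /lab /=; lia. Qed.

Lemma lab_unary_depth s : lab s = (lab (strip s) - (unary_depth s)%:Z)%R.
Proof. by rewrite -lab_iter_Unary iter_Unary_strip. Qed.

Lemma lab_ge0 s : admissible s -> (0 <= lab s)%R.
Proof. by move/admissible_nunary; rewrite /lab; lia. Qed.

Lemma sum_labels_cons x c : sum_labels (x :: c) = (vlabel x + sum_labels c)%R.
Proof. exact: big_cons. Qed.

Lemma lab_strip s : admissible s -> lab (strip s) = (1 + sum_labels (kids s))%R.
Proof.
elim: s => [|u IH|l IHl r _] /=; first by rewrite /sum_labels big_nil.
  by case/andP=> /IH.
case/and3P=> /IHl lab_l _ unary_l; rewrite lspine_kids // sum_labels_cons lab_Binary.
rewrite strip_id // in lab_l; rewrite lab_l /=; lia.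
Qed.

Lemma nonroot_ok_node r : admissible r -> all nonroot_ok (kids r) -> nonroot_ok (node r).
Proof.
move=> adm_r ok_kids; rewrite /= ok_kids lab_ge0 // andbT.
have := lab_unary_depth r; rewrite lab_strip // => lab_r.
apply/andP; split; last by rewrite lab_r; lia.
apply/implyP=> /nilP kids_nil; move: lab_r (lab_ge0 adm_r).
by rewrite kids_nil /sum_labels big_nil; lia.
Qed.

Lemma kids_nonroot_ok s : admissible s -> all nonroot_ok (kids s).
Proof.
elim: s => [//|u IH|l IHl r IHr] adm_s; first by apply: IH; case/andP: adm_s.
case/and3P: adm_s => adm_l adm_r unary_l; rewrite kids_Binary //.
by apply/andP; split; [exact: nonroot_ok_node (IHr adm_r) | exact: IHl].
Qed.

Lemma nnodes_kids s : admissible s -> sumn (map nnodes (kids s)) = nbinary s.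
Proof.
elim: s => [//|u IH|l IHl r IHr] adm_s; first by apply: IH; case/andP: adm_s.
case/and3P: adm_s => adm_l adm_r unary_l.
by rewrite kids_Binary //= IHl // IHr //; lia.
Qed.

Lemma vsize_psi s : admissible s -> vsize (psi s) = nbinary s.
Proof. by move=> adm; rewrite /vsize /= nnodes_kids. Qed.

Lemma psi_is_vtree s : admissible s -> is_vtree (psi s).
Proof.
move=> adm; rewrite /= kids_nonroot_ok // lab_strip // eqxx /= andbT.
by apply/implyP=> /nilP ->; rewrite /sum_labels big_nil addr0 eqxx orbT.
Qed.

Fixpoint comb (rs : seq ubtree) : ubtree :=
  if rs is r :: rs' then Binary (comb rs') r else Leaf.

Fixpoint unnode (t : vtree) : ubtree :=
  let: VNode l c := t in
  iter `|(1 + sum_labels c - l)%R|%N Unary (comb (map unnode c)).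

Definition unpsi (t : vtree) : ubtree :=
  let: VNode l c := t in iter `|l|%N Unary (comb (map unnode c)).

Lemma comb_not_unary rs : ~~ unary_node (comb rs).
Proof. by case: rs. Qed.

Lemma admissible_comb rs : admissible (comb rs) = all admissible rs.
Proof. by elim: rs => //= r rs ->; rewrite comb_not_unary andbT andbC. Qed.

Lemma kids_comb rs : kids (comb rs) = map node rs.
Proof. by elim: rs => //= r rs <-; rewrite lspine_kids ?comb_not_unary. Qed.

Lemma lab_comb rs : lab (comb rs) = (1 + sum_labels (map node rs))%R.
Proof.
elim: rs => [|r rs IHrs]; first by rewrite /sum_labels big_nil.
rewrite map_cons lab_Binary IHrs sum_labels_cons /=; lia.
Qed.

Lemma admissible_iter_Unary k s :
  admissible s -> (k%:Z <= lab s)%R -> admissible (iter k Unary s).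
Proof.
move=> adm_s; elim: k => [//|k IHk] le_k /=.
rewrite IHk /=; last lia.
by move: (lab_iter_Unary k s) le_k; rewrite /lab; lia.
Qed.

Lemma unnode_node s :
  admissible s -> comb (map unnode (kids s)) = strip s -> unnode (node s) = s.
Proof.
move=> adm_s comb_kids; rewrite /= comb_kids.
have -> : `|(1 + sum_labels (kids s) - lab s)%R|%N = unary_depth s.
  by have := lab_unary_depth s; rewrite lab_strip //; lia.
exact: iter_Unary_strip.
Qed.

Lemma comb_unnode_kids s : admissible s -> comb (map unnode (kids s)) = strip s.
Proof.
elim: s => [//|u IH|l IHl r IHr] adm_s; first by apply: IH; case/andP: adm_s.
case/and3P: adm_s => adm_l adm_r unary_l.
by rewrite kids_Binary // map_cons unnode_node ?IHr //= IHl // strip_id.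
Qed.

Lemma unpsi_psi s : admissible s -> nunary s = nleaf s -> unpsi (psi s) = s.
Proof.
move=> adm_s balanced; rewrite /= comb_unnode_kids //.
have -> : `|lab (strip s)|%N = unary_depth s.
  by have := lab_unary_depth s; rewrite {1}/lab balanced; lia.
exact: iter_Unary_strip.
Qed.

Lemma vtree_ind_in (P : vtree -> Prop) :
  (forall l c, (forall x, List.In x c -> P x) -> P (VNode l c)) -> forall t, P t.
Proof.
move=> IHnode; fix IH 1 => -[l c]; apply: IHnode.
have : foldr (fun x acc => P x /\ acc) True c.
  elim: c => [//|y c Pc] /=; split; [exact: IH | exact: Pc].
clear IH; elim: c => [//|y c IHc] [Py Pc] x /= [<- //|]; exact: IHc.
Qed.

Lemma In_all (T : Type) (p : pred T) s x : all p s -> List.In x s -> p x.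
Proof. by elim: s => //= y s IHs /andP[py ps] [<- // | /(IHs ps)]. Qed.

Lemma comb_unnode c :
  (forall x, List.In x c -> admissible (unnode x) /\ node (unnode x) = x) ->
  [/\ admissible (comb (map unnode c)), kids (comb (map unnode c)) = c
    & lab (comb (map unnode c)) = (1 + sum_labels c)%R].
Proof.
move=> unnode_c; rewrite admissible_comb lab_comb kids_comb -map_comp.
suff [-> ->] : all admissible (map unnode c) /\ map (node \o unnode) c = c by [].
elim: c unnode_c => [//|x c IHc] unnode_c /=.
have [adm_x node_x] := unnode_c x (or_introl erefl).
have [-> ->] := IHc (fun y cy => unnode_c y (or_intror cy)).
by rewrite adm_x node_x.
Qed.

Lemma node_unnode t : nonroot_ok t -> admissible (unnode t) /\ node (unnode t) = t.
Proof.
elim/vtree_ind_in: t => l c IH /and4P [_ l_ge0 l_le ok_c] /=.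
have [adm_comb kids_comb_c lab_comb_c] :=
  comb_unnode (fun x cx => IH x cx (In_all ok_c cx)).
set k := `|_|%N.
have k_le : (k%:Z <= lab (comb (map unnode c)))%R by rewrite lab_comb_c /k; lia.
split; first exact: admissible_iter_Unary.
by rewrite /node lab_iter_Unary kids_iter_Unary kids_comb_c lab_comb_c /k; congr VNode; lia.
Qed.

Lemma psi_unpsi t : is_vtree t ->
  [/\ admissible (unpsi t), nunary (unpsi t) = nleaf (unpsi t) & psi (unpsi t) = t].
Proof.
case: t => l c /and3P [_ /eqP l_eq ok_c] /=.
have [adm_comb kids_comb_c lab_comb_c] :=
  comb_unnode (fun x cx => node_unnode (In_all ok_c cx)).
have l_le : (`|l|%N%:Z <= lab (comb (map unnode c)))%R.
  by have := lab_ge0 adm_comb; rewrite lab_comb_c; lia.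
split; first exact: admissible_iter_Unary.
  move: (lab_iter_Unary `|l|%N (comb (map unnode c))) l_le.
  by rewrite lab_comb_c -l_eq /lab; lia.
rewrite /psi strip_iter_Unary kids_iter_Unary (strip_id (comb_not_unary _)).
by rewrite kids_comb_c lab_comb_c l_eq.
Qed.

Theorem proposition10 (n : nat) : 1 <= n ->
  [/\ (forall s, S1 n s -> V n.-1 (psi s)),
      (forall s1 s2, S1 n s1 -> S1 n s2 -> psi s1 = psi s2 -> s1 = s2) &
      (forall t, V n.-1 t -> exists2 s, S1 n s & psi s = t)].
Proof.
move=> n_gt0; split.
- move=> s /S1P [adm _ <-]; split; first exact: psi_is_vtree.
  by rewrite vsize_psi // nleaf_nbinary.
- move=> s1 s2 /S1P [adm1 bal1 _] /S1P [adm2 bal2 _] psi_eq.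
  by rewrite -(unpsi_psi adm1 bal1) psi_eq unpsi_psi.
- move=> t [vt size_t]; have [adm bal psi_t] := psi_unpsi vt.
  exists (unpsi t) => //; apply/S1P; split=> //.
  by rewrite nleaf_nbinary -vsize_psi // psi_t size_t prednK.
Qed.
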